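(* If $\phi\in C(\mathbb{Z}_p,\mathbb{C}_p)$ and $x,y\in\mathbb{Z}_p$, then $$T^x(\phi)(y)=\int_{\mathbb{Z}_p}(\mathbf 1-\mathbf x)^{\star y}\,d\mu_{\phi,x}=\big((\mathbf 1-\mathbf x)^{\star y}\star\phi\big)(x).$$
   Context: Fix a prime $p$. $\mathbb{C}_p$ denotes the completion of an algebraic closure of $\mathbb{Q}_p$, with absolute value $|\cdot|$ normalized by $|p|=1/p$. $C(\mathbb{Z}_p,\mathbb{C}_p)$ is the $\mathbb{C}_p$-Banach space of continuous functions $\mathbb{Z}_p\to\mathbb{C}_p$ with the sup-norm $\|\cdot\|$. For $n\in\mathbb{Z}_{\ge0}$ and $x\in\mathbb{Z}_p$, $\binom{x}{n}=x(x-1)\cdots(x-n+1)/n!$. For $\phi$ let $(\nabla\phi)(x)=\phi(x+1)-\phi(x)$; every $\phi$ has the Mahler expansion $\phi(x)=\sum_{n\ge0}(\nabla^n\phi)(0)\binom{x}{n}$. The convolution $\phi\star\psi$ is the continuous function with Mahler coefficients $(\nabla^n(\phi\star\psi))(0)=\sum_{k=0}^n\binom nk(\nabla^k\phi)(0)(\nabla^{n-k}\psi)(0)$. For $y\in\mathbb{Z}_p$, $S^y(\phi)(x)=\sum_{k\ge0}(-1)^k k!\binom yk\binom xk\phi(x-k)$; for $x\in\mathbb{Z}_p$, $T^x(\phi)(y)=S^y(\phi)(x)$. $\mathbf 1$ is the constant function $1$, $\mathbf x$ is $x\mapsto x$, and $(\mathbf 1-\mathbf x)^{\star y}:=S^y(\mathbf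 1)$. A measure is a bounded $\mathbb{C}_p$-linear functional on $C(\mathbb{Z}_p,\mathbb{C}_p)$, its value on $\chi$ written $\int_{\mathbb{Z}_p}\chi\,d\mu$; for $\phi\in C(\mathbb{Z}_p,\mathbb{C}_p)$ and $x\in\mathbb{Z}_p$, $\mu_{\phi,x}$ is the measure with $\int_{\mathbb{Z}_p}\chi\,d\mu_{\phi,x}=\sum_{n\ge0}(\nabla^n\chi)(0)\binom{x}{n}\phi(x-n)$. *)

From HB Require Import structures.
From mathcomp Require Import all_boot all_order all_algebra.
From mathcomp Require Import reals.
From Stdlib Require Import ClassicalEpsilon.
Set Implicit Arguments. Unset Strict Implicit. Unset Printing Implicit Defensive.
Import Order.TTheory GRing.Theory Num.Theory.
Local Open Scope ring_scope.

(* C_p, axiomatized up to isometric isomorphism: an algebraically closed   *)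
(* field K with a real absolute value abs which is multiplicative,         *)
(* ultrametric, complete, normalized by |p| = 1/p, and in which the        *)
(* algebraic numbers (elements algebraic over Q) are dense.  Such a valued *)
(* field is (isometrically isomorphic to) the completion of an algebraic   *)
(* closure of Q_p.                                                         *)

Definition algebraic_over_Q (K : closedFieldType) (x : K) : Prop :=
  exists q : {poly rat}, q != 0 /\ root (map_poly (@ratr K) q) x.

Record is_Cp (p : nat) (K : closedFieldType) (R : realType) (abs : K -> R)
  : Prop := IsCp {
  Cp_abs_eq0 : forall x, (abs x = 0) <-> (x = 0);
  Cp_abs_ge0 : forall x, 0 <= abs x;
  Cp_abs_mul : forall x y, abs (x * y) = abs x * abs y;
  Cp_abs_ultra : forall x y, abs (x + y) <= Num.max (abs x) (abs y);
  Cp_abs_p : abs (p%:R) = (p%:R)^-1;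
  Cp_complete : forall u : nat -> K,
     (forall eps : R, 0 < eps -> exists N, forall m n, (N <= m)%N -> (N <= n)%N ->
        abs (u m - u n) < eps) ->
     exists L, forall eps : R, 0 < eps -> exists N, forall n, (N <= n)%N ->
        abs (u n - L) < eps;
  Cp_algebraic_dense : forall (x : K) (eps : R), 0 < eps ->
     exists y, algebraic_over_Q y /\ abs (x - y) < eps
}.

Section Defs.
Variables (K : closedFieldType) (R : realType) (abs : K -> R).

(* Z_p inside C_p: the closure of the natural numbers. *)
Definition Zp_set (x : K) : Prop :=
  forall eps : R, 0 < eps -> exists n : nat, abs (x - n%:R) < eps.

(* continuous functions Z_p -> C_p (values outside Z_p are irrelevant) *)
Definition cont_on_Zp (phi : K -> K) : Prop :=
  forall x, Zp_set x -> forall eps : R, 0 < eps -> exists2 delta : R, 0 < delta &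
    forall z, Zp_set z -> abs (z - x) < delta -> abs (phi z - phi x) < eps.

Definition series_to (a : nat -> K) (L : K) : Prop :=
  forall eps : R, 0 < eps -> exists N, forall n, (N <= n)%N ->
    abs (\sum_(i < n) a i - L) < eps.

(* the value of a convergent series (0 by convention if it diverges) *)
Definition ssum (a : nat -> K) : K :=
  epsilon (inhabits 0) (fun L => series_to a L).

End Defs.

Definition binomK (K : fieldType) (x : K) (n : nat) : K :=
  (\prod_(i < n) (x - i%:R)) / (n`!)%:R.

Definition nabla (K : fieldType) (phi : K -> K) : K -> K :=
  fun x => phi (x + 1) - phi x.

Definition mahler (K : fieldType) (phi : K -> K) (n : nat) : K :=
  iter n (@nabla K) phi 0.

Section Ops.
Variables (K : closedFieldType) (R : realType) (abs : K -> R).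

Definition Sop (y : K) (phi : K -> K) (x : K) : K :=
  ssum abs (fun k => (-1) ^+ k * (k`!)%:R * binomK y k * binomK x k
                      * phi (x - k%:R)).

Definition Top (x : K) (phi : K -> K) (y : K) : K := Sop y phi x.

Definition one_minus_x_star (y : K) : K -> K := Sop y (fun _ => 1).

Definition integral_mu (phi : K -> K) (x : K) (chi : K -> K) : K :=
  ssum abs (fun n => mahler chi n * binomK x n * phi (x - n%:R)).

Definition conv (phi psi : K -> K) (x : K) : K :=
  ssum abs (fun n => (\sum_(k < n.+1) ('C(n, k))%:R * mahler phi k
                                       * mahler psi (n - k)) * binomK x n).

End Ops.

From HB Require Import structures.
From mathcomp Require Import all_boot all_order all_algebra.
From mathcomp Require Import reals.
From mathcomp Require Import ring lra zify.
From Stdlib Require Import ClassicalEpsilon Classical FunctionalExtensionality.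
Set Implicit Arguments. Unset Strict Implicit. Unset Printing Implicit Defensive.
Import Order.TTheory GRing.Theory Num.Theory.
Local Open Scope ring_scope.

(* The Mahler coefficients of (1 - x)^{*y} are (-1)^k k! binom(y, k) (read off
   from its values at the natural numbers), so the first equality is an unfolding.
   For the second, both sides are series of multiples of binom(x, n) whose terms
   tend to 0 uniformly on Z_p: k! tends to 0 p-adically, and the Mahler
   coefficients of phi tend to 0 since phi is uniformly continuous and bounded.
   At a natural number x = m both series are finite sums, equal by a binomial
   convolution identity; as the partial sums are continuous and the natural
   numbers are dense in Z_p, the equality extends to every x in Z_p. *)

Lemma prime_dvd_bin_expn p s j : prime p -> (0 < j < p ^ s)%N -> (p %| 'C(p ^ s, j))%N.
Proof.
move=> hp /andP [j0 js]; apply: contraT => nd.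
have cop : coprime (p ^ s) 'C(p ^ s, j) by apply: coprimeXl; rewrite prime_coprime.
have : (p ^ s %| j * 'C(p ^ s, j))%N by rewrite -(prednK j0) -mul_bin_diag dvdn_mulr.
by rewrite Gauss_dvdl // => /(dvdn_leq j0); rewrite leqNgt js.
Qed.

Lemma bin_mul_swap m n N : (n <= N)%N ->
  ('C(m, n) * 'C(m - n, N - n) = 'C(m, N) * 'C(N, n))%N.
Proof.
move=> hnN; case: (leqP N m) => hNm; last first.
  rewrite (bin_small hNm) mul0n; case: (leqP n m) => hnm.
    by rewrite (@bin_small (m - n) (N - n)) ?muln0 //; lia.
  by rewrite bin_small.
have hnm : (n <= m)%N by apply: leq_trans hNm.
have f0 : (0 < n`! * (N - n)`! * (m - N)`!)%N by rewrite !muln_gt0 !fact_gt0.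
apply/eqP; rewrite -(eqn_pmul2r f0); apply/eqP.
have e1 : (m - n - (N - n) = m - N)%N by rewrite subnBA // subnK.
have h1 := bin_fact hnm.
have h2 : ('C(m - n, N - n) * ((N - n)`! * (m - N)`!))%N = (m - n)`!.
  by rewrite -e1 bin_fact // leq_sub2r.
have h3 := bin_fact hNm.
have h4 := bin_fact hnN.
transitivity (m`!); first by rewrite -h1 -h2; ring.
by rewrite -h3 -h4; ring.
Qed.

Section FiniteDifferences.
Variable F : comPzRingType.
Implicit Types (g : nat -> F) (a : nat -> F).

Definition fdiff (g : nat -> F) : nat -> F := fun m => g m.+1 - g m.

Definition newton_coef (g : nat -> F) (k : nat) : F := iter k fdiff g 0.

Definition binom_comb (a : nat -> F) (B m : nat) : F := \sum_(0 <= k < B) a k * 'C(m, k)%:R.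

Lemma binom_comb_step a m :
  binom_comb a m.+2 m.+1 = binom_comb a m.+1 m + binom_comb (fun k => a k.+1) m.+1 m.
Proof.
rewrite /binom_comb.
have E1 : \sum_(0 <= k < m.+2) a k * 'C(m.+1, k)%:R
   = a 0%N + \sum_(0 <= k < m.+1) a k.+1 * 'C(m, k.+1)%:R
     + \sum_(0 <= k < m.+1) a k.+1 * 'C(m, k)%:R.
  rewrite big_nat_recl // bin0 mulr1 -addrA -big_split /=; congr (_ + _).
  by apply: eq_bigr => k _; rewrite binS natrD mulrDr.
have E2 : \sum_(0 <= k < m.+1) a k * 'C(m, k)%:R
   = a 0%N + \sum_(0 <= k < m.+1) a k.+1 * 'C(m, k.+1)%:R.
  rewrite big_nat_recl // bin0 mulr1; congr (_ + _).
  by rewrite [in RHS]big_nat_recr //= bin_small // mulr0 addr0.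
by rewrite E1 E2.
Qed.

Lemma newton_coef_fdiff g k : newton_coef (fdiff g) k = newton_coef g k.+1.
Proof. by rewrite /newton_coef iterSr. Qed.

Lemma newton_coef_binom_comb a n : newton_coef (fun m => binom_comb a m.+1 m) n = a n.
Proof.
elim: n a => [|n ih] a; first by rewrite /newton_coef /= /binom_comb big_nat1 bin0 mulr1.
rewrite -newton_coef_fdiff.
have -> : fdiff (fun m => binom_comb a m.+1 m) = fun m => binom_comb (fun k => a k.+1) m.+1 m.
  by apply: functional_extensionality => m; rewrite /fdiff binom_comb_step; ring.
exact: ih.
Qed.

Lemma newton_expansion g m : g m = binom_comb (newton_coef g) m.+1 m.
Proof.
elim: m g => [|m ih] g; first by rewrite /binom_comb big_nat1 bin0 mulr1.
have -> : g m.+1 = g m + fdiff g m by rewrite /fdiff; ring.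
rewrite binom_comb_step (ih g) (ih (fdiff g)); congr (_ + _).
by rewrite /binom_comb; apply: eq_bigr => k _; rewrite newton_coef_fdiff.
Qed.

Lemma iter_fdiffE g n m :
  iter n fdiff g m = \sum_(0 <= j < n.+1) (-1) ^+ (n - j) * 'C(n, j)%:R * g (m + j)%N.
Proof.
elim: n m => [|n ih] m; first by rewrite big_nat1 /= subnn expr0 bin0 !mul1r addn0.
rewrite iterS /fdiff !ih.
set T := \sum_(0 <= j < n.+1) (-1) ^+ (n - j) * 'C(n, j.+1)%:R * g (m + j.+1)%N.
set U := \sum_(0 <= j < n) (-1) ^+ (n - j.+1) * 'C(n, j.+1)%:R * g (m + j.+1)%N.
have A : \sum_(0 <= j < n.+2) (-1) ^+ (n.+1 - j) * 'C(n.+1, j)%:R * g (m + j)%N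
   = (-1) ^+ n.+1 * g m
     + \sum_(0 <= j < n.+1) (-1) ^+ (n - j) * 'C(n, j)%:R * g (m.+1 + j)%N + T.
  rewrite big_nat_recl // subn0 bin0 mulr1 addn0 -addrA -big_split /=; congr (_ + _).
  by apply: eq_bigr => j _; rewrite subSS binS natrD addSnnS; ring.
have B : \sum_(0 <= j < n.+1) (-1) ^+ (n - j) * 'C(n, j)%:R * g (m + j)%N
   = (-1) ^+ n * g m + U.
  by rewrite big_nat_recl // subn0 bin0 mulr1 addn0.
have C : T = - U.
  rewrite /T big_nat_recr //= bin_small // mulr0 mul0r addr0 /U -sumrN.
  rewrite big_nat_cond [in RHS]big_nat_cond.
  apply: eq_bigr => j /andP [/andP [_ hj] _].
  by rewrite -(subnSK hj) exprS mulN1r !mulNr.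
by rewrite A B C exprS mulN1r; ring.
Qed.

Lemma iter_fdiff_shiftB g D n m :
  iter n fdiff g (m + D)%N - iter n fdiff g m
  = iter n fdiff (fun m => g (m + D)%N - g m) m.
Proof.
by rewrite !iter_fdiffE -sumrB; apply: eq_bigr => j _; rewrite mulrBr addnAC.
Qed.

Lemma sum_triangle (f : nat -> nat -> F) M :
  \sum_(0 <= N < M) \sum_(0 <= n < N.+1) f n (N - n)%N
  = \sum_(0 <= n < M) \sum_(0 <= j < M - n) f n j.
Proof.
elim: M => [|M ih]; first by rewrite !big_geq.
rewrite big_nat_recr //= ih.
have -> : \sum_(0 <= n < M.+1) \sum_(0 <= j < M.+1 - n) f n j
  = \sum_(0 <= n < M.+1) (\sum_(0 <= j < M - n) f n j + f n (M - n)%N).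
  rewrite big_nat_cond [in RHS]big_nat_cond.
  apply: eq_bigr => n /andP [/andP [_ hn] _].
  by rewrite subSn // big_nat_recr.
rewrite big_split /=; congr (_ + _).
by rewrite [in RHS]big_nat_recr //= subnn [X in _ = _ + X]big_geq // addr0.
Qed.

(* The value at m of the convolution of g with the sequence whose Newton
   coefficients are a, computed in two ways. *)
Lemma binomial_convolution a g m :
  \sum_(0 <= n < m.+1) a n * 'C(m, n)%:R * g (m - n)%N
  = \sum_(0 <= N < m.+1)
      (\sum_(0 <= k < N.+1) 'C(N, k)%:R * a k * newton_coef g (N - k)%N) * 'C(m, N)%:R.
Proof.
have -> : \sum_(0 <= n < m.+1) a n * 'C(m, n)%:R * g (m - n)%N
  = \sum_(0 <= n < m.+1) \sum_(0 <= j < m.+1 - n)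
       (a n * 'C(m, n)%:R) * (newton_coef g j * 'C(m - n, j)%:R).
  rewrite big_nat_cond [in RHS]big_nat_cond.
  apply: eq_bigr => n /andP [/andP [_ hn] _].
  by rewrite (newton_expansion g (m - n)) /binom_comb mulr_sumr subSn.
rewrite -sum_triangle; apply: eq_bigr => N _.
rewrite mulr_suml big_nat_cond [in RHS]big_nat_cond.
apply: eq_bigr => n /andP [/andP [_ hn] _].
have e : ('C(m, n)%:R * 'C(m - n, N - n)%:R : F) = 'C(m, N)%:R * 'C(N, n)%:R.
  by rewrite -!natrM bin_mul_swap.
transitivity (a n * newton_coef g (N - n)%N * ('C(m, n)%:R * 'C(m - n, N - n)%:R)).
  by ring.
by rewrite e; ring.
Qed.

End FiniteDifferences.

Arguments fdiff {F} g.

Lemma mahler_nat (F : fieldType) (f : F -> F) n :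
  mahler f n = newton_coef (fun m => f m%:R) n.
Proof.
rewrite /mahler /newton_coef.
suff E : forall m, iter n (@nabla F) f m%:R = iter n (@fdiff F) (fun m => f m%:R) m.
  exact: E 0%N.
by elim: n => [|n ih] m //=; rewrite /nabla /fdiff natr1 !ih.
Qed.

Definition infinitely (P : nat -> Prop) := forall s, exists2 s', (s <= s')%N & P s'.

Lemma infinitely_pigeonhole (Q : nat -> nat -> Prop) N :
  infinitely (fun s => exists2 r, (r < N)%N & Q r s) ->
  exists2 r, (r < N)%N & infinitely (Q r).
Proof.
elim: N => [|N ih] h; first by have [s' _ [r]] := h 0%N.
case: (classic (infinitely (Q N))) => [hN|hN]; first by exists N.
have [s0 hs0] : exists s0, forall s', (s0 <= s')%N -> ~ Q N s'.
  apply: NNPP => hn; apply: hN => s; apply: NNPP => hs; apply: hn.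
  by exists s => s' hs' hQ; apply: hs; exists s'.
have [r hr hQ] : exists2 r, (r < N)%N & infinitely (Q r).
  apply: ih => s; have [s' hs' [r hr hQ]] := h (maxn s s0).
  exists s'; first exact: leq_trans (leq_maxl _ _) hs'.
  exists r => //; move: hr; rewrite ltnS leq_eqVlt => /orP [/eqP er|//].
  by case: (hs0 s'); [exact: leq_trans (leq_maxr _ _) hs' | rewrite -er].
by exists r; first exact: leqW.
Qed.

Lemma nat_dependent_choice (P : nat -> nat -> Prop) (Q : nat -> nat -> nat -> Prop) j0 :
  P 0%N j0 -> (forall k j, P k j -> exists r, P k.+1 r /\ Q k j r) ->
  exists J : nat -> nat, forall k, P k (J k) /\ Q k (J k) (J k.+1).
Proof.
move=> h0 hstep.
pose next k j := epsilon (inhabits 0%N) (fun r => P k.+1 r /\ Q k j r).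
pose J := fix J (k : nat) : nat := if k is k'.+1 then next k' (J k') else j0.
have hJ : forall k, P k (J k).
  by elim=> [//|k ih]; exact: (epsilon_spec (inhabits 0%N) _ (hstep _ _ ih)).1.
by exists J => k; split => //; exact: (epsilon_spec (inhabits 0%N) _ (hstep _ _ (hJ k))).2.
Qed.

Section Ultrametric.
Variables (p : nat) (K : closedFieldType) (R : realType) (abs : K -> R).
Hypotheses (hp : prime p) (hK : is_Cp p abs).

Local Notation ip := ((p%:R : R)^-1).
Local Notation Zp := (Zp_set abs).

Lemma abs0 : abs 0 = 0.
Proof. by apply/(Cp_abs_eq0 hK). Qed.

Lemma abs_eq0 x : abs x = 0 -> x = 0.
Proof. by move/(Cp_abs_eq0 hK). Qed.

Lemma abs_ge0 x : 0 <= abs x.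
Proof. exact: (Cp_abs_ge0 hK). Qed.

Lemma absM x y : abs (x * y) = abs x * abs y.
Proof. exact: (Cp_abs_mul hK). Qed.

Lemma abs1 : abs 1 = 1.
Proof.
have h1 : abs 1 != 0 by apply/eqP => /abs_eq0 /eqP; rewrite oner_eq0.
by apply: (mulfI h1); rewrite mulr1 -absM mulr1.
Qed.

Lemma absN1 : abs (-1) = 1.
Proof.
have h : abs (-1) * abs (-1) = 1 by rewrite -absM mulrNN mulr1 abs1.
have h0 := abs_ge0 (-1).
have : (abs (-1) - 1) * (abs (-1) + 1) = 0 by rewrite mulrBl !mulrDr h; ring.
move/eqP; rewrite mulf_eq0 => /orP [|]; first by rewrite subr_eq0 => /eqP.
by move=> /eqP H; exfalso; lra.
Qed.

Lemma absN x : abs (- x) = abs x.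
Proof. by rewrite -mulN1r absM absN1 mul1r. Qed.

Lemma abs_distC x y : abs (x - y) = abs (y - x).
Proof. by rewrite -absN opprB. Qed.

Lemma abs_add_le x y e : abs x <= e -> abs y <= e -> abs (x + y) <= e.
Proof.
by move=> h1 h2; apply: le_trans (Cp_abs_ultra hK x y) _; rewrite ge_max h1 h2.
Qed.

Lemma abs_add_lt x y e : abs x < e -> abs y < e -> abs (x + y) < e.
Proof.
by move=> h1 h2; apply: le_lt_trans (Cp_abs_ultra hK x y) _; rewrite gt_max h1 h2.
Qed.

Lemma abs_sub_le x y e : abs x <= e -> abs y <= e -> abs (x - y) <= e.
Proof. by move=> h1 h2; apply: abs_add_le; rewrite ?absN. Qed.

Lemma abs_sub_lt x y e : abs x < e -> abs y < e -> abs (x - y) < e.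
Proof. by move=> h1 h2; apply: abs_add_lt; rewrite ?absN. Qed.

Lemma abs_dist_trans x y z e : abs (x - y) < e -> abs (y - z) < e -> abs (x - z) < e.
Proof. by move=> h1 h2; have := abs_add_lt h1 h2; rewrite addrA subrK. Qed.

Lemma abs_sum_le (I : Type) (r : seq I) (P : pred I) (F : I -> K) e :
  0 <= e -> (forall i, P i -> abs (F i) <= e) -> abs (\sum_(i <- r | P i) F i) <= e.
Proof.
move=> e0 h; elim/big_rec: _ => [|i x Pi hx]; first by rewrite abs0.
exact: abs_add_le (h _ Pi) hx.
Qed.

Lemma abs_sum_lt (I : Type) (r : seq I) (P : pred I) (F : I -> K) e :
  0 < e -> (forall i, P i -> abs (F i) < e) -> abs (\sum_(i <- r | P i) F i) < e.
Proof.
move=> e0 h; elim/big_rec: _ => [|i x Pi hx]; first by rewrite abs0.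
exact: abs_add_lt (h _ Pi) hx.
Qed.

Lemma abs_nat_le1 n : abs n%:R <= 1.
Proof.
elim: n => [|n ih]; first by rewrite abs0.
by rewrite -natr1; apply: abs_add_le => //; rewrite abs1.
Qed.

Lemma abs_sign k : abs ((-1) ^+ k) = 1.
Proof. by elim: k => [|k ih]; rewrite ?expr0 ?abs1 // exprS absM ih absN1 mulr1. Qed.

Lemma absX x k : abs (x ^+ k) = abs x ^+ k.
Proof. by elim: k => [|k ih]; rewrite ?expr0 ?abs1 // !exprS absM ih. Qed.

Lemma absV x : x != 0 -> abs x^-1 = (abs x)^-1.
Proof.
move=> x0; have h : abs x * abs x^-1 = 1 by rewrite -absM mulfV // abs1.
have hx : abs x != 0 by apply/eqP => /abs_eq0 /eqP; rewrite (negbTE x0).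
by rewrite -[abs x^-1]mul1r -(mulVf hx) -mulrA h mulr1.
Qed.

Lemma ip_gt0 : 0 < ip.
Proof. by rewrite invr_gt0 ltr0n prime_gt0. Qed.

Lemma ip_lt1 : ip < 1.
Proof. by rewrite invf_lt1 ?ltr0n ?prime_gt0 // ltr1n prime_gt1. Qed.

Lemma ipX_ge0 k : 0 <= ip ^+ k.
Proof. by rewrite exprn_ge0 // ltW // ip_gt0. Qed.

Lemma abs_natM_pX t k : abs (t * p ^ k)%:R <= ip ^+ k.
Proof.
by rewrite natrM absM natrX absX (Cp_abs_p hK) ler_piMl ?ipX_ge0 ?abs_nat_le1.
Qed.

(* Naturals have absolute value <= 1 and |p| < 1, so n%:R = 0 would force |1| < 1
   through a relation 1 + a p = 0 in K (Bezout modulo the characteristic). *)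
Lemma natf_neq0 n : (0 < n)%N -> (n%:R : K) != 0.
Proof.
move=> n0; apply/negP => hn.
have [q hq] := natf0_pchar n0 hn.
have qpr := pcharf_prime hq.
have q0 : (q%:R : K) = 0 by apply/eqP; case/andP: hq.
case: (eqVneq q p) => [eqp|neq].
  have := Cp_abs_p hK; rewrite -eqp q0 abs0 => /esym/eqP.
  by rewrite invr_eq0 pnatr_eq0 => /eqP q00; move: (prime_gt0 qpr); rewrite q00.
have cop : coprime q p by rewrite prime_coprime // dvdn_prime2 // eq_sym.
have [a _ ha] := Bezoutl p (prime_gt0 qpr).
move: ha; rewrite (eqP cop) => /dvdnP [b hb].
have hz : (1 + a%:R * p%:R : K) = 0.
  by have := congr1 (fun n => n%:R : K) hb; rewrite /= natrD !natrM q0 mulr0.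
have : abs (1 : K) < 1.
  rewrite -(subr0 1) -hz opprD addrA subrr add0r absN absM (Cp_abs_p hK).
  by apply: le_lt_trans ip_lt1; rewrite ler_piMl ?abs_nat_le1 // ltW // ip_gt0.
by rewrite abs1 ltxx.
Qed.

Lemma ipX_small (eps : R) : 0 < eps -> exists s, ip ^+ s < eps.
Proof.
move=> e0; set n := Num.Def.archi_bound (eps^-1).
have h1 : eps^-1 < n%:R by apply: archi_boundP; rewrite invr_ge0 ltW.
have h2 : (n%:R : R) < (p%:R) ^+ n by rewrite -natrX ltr_nat ltn_expl // prime_gt1.
exists n; rewrite exprVn -[eps]invrK ltf_pV2 ?posrE ?invr_gt0 //.
  exact: lt_trans h1 h2.
by rewrite exprn_gt0 // ltr0n prime_gt0.
Qed.

Lemma abs_natB_eqmod a b k : a = b %[mod p ^ k] -> abs (a%:R - b%:R) <= ip ^+ k.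
Proof.
wlog ab : a b / (b <= a)%N.
  move=> h e; case: (leqP b a) => [ba|/ltnW ab]; first exact: h.
  by rewrite abs_distC; apply: h.
move=> e; have : a == b %[mod p ^ k] by rewrite e.
by rewrite eqn_mod_dvd // => /dvdnP [t ht]; rewrite -natrB // ht abs_natM_pX.
Qed.

Lemma Zp_nat n : Zp n%:R.
Proof. by move=> e e0; exists n; rewrite subrr abs0. Qed.

Lemma Zp_le1 z : Zp z -> abs z <= 1.
Proof.
move=> hz; rewrite leNgt; apply/negP => h.
have [n hn] : exists n, abs (z - n%:R) < abs z - 1 by apply: hz; rewrite subr_gt0.
have : abs (z - n%:R + n%:R) < abs z.
  apply: abs_add_lt; first by apply: lt_le_trans hn _; rewrite lerBlDr lerDl.
  exact: le_lt_trans (abs_nat_le1 _) h.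
by rewrite subrK ltxx.
Qed.

(* The approximant must be taken >= n to avoid truncated subtraction: shift it
   by a multiple of a high power of p. *)
Lemma Zp_subn z n : Zp z -> Zp (z - n%:R).
Proof.
move=> hz e e0; have [s hs] := ipX_small e0.
have [m hm] := hz e e0.
exists (m + n * p ^ s - n)%N.
have nle : (n <= m + n * p ^ s)%N.
  by apply: leq_trans (leq_addl m _); rewrite leq_pmulr // expn_gt0 prime_gt0.
rewrite natrB // natrD.
have -> : z - n%:R - (m%:R + (n * p ^ s)%:R - n%:R) = (z - m%:R) - (n * p ^ s)%:R.
  by ring.
by apply: abs_sub_lt => //; exact: le_lt_trans (abs_natM_pX _ _) hs.
Qed.

Definition tends0 (a : nat -> K) :=
  forall e : R, 0 < e -> exists N, forall n, (N <= n)%N -> abs (a n) < e.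

Lemma abs_fact_le n m : (n <= m)%N -> abs (m`!%:R) <= abs (n`!%:R : K).
Proof.
move=> /subnKC <-; elim: (m - n)%N => [|k ih]; first by rewrite addn0.
rewrite addnS factS natrM absM; apply: le_trans ih.
by rewrite ler_piMl ?abs_ge0 ?abs_nat_le1.
Qed.

Lemma abs_fact_mulp k : abs ((k * p)`!%:R : K) <= ip ^+ k.
Proof.
elim: k => [|k ih]; first by rewrite mul0n fact0 abs1 expr0.
have hN : (0 < k.+1 * p)%N by rewrite muln_gt0 (prime_gt0 hp).
rewrite -(prednK hN) factS natrM absM prednK // exprS.
apply: ler_pM; rewrite ?abs_ge0 //.
  by have := abs_natM_pX k.+1 1; rewrite expn1 expr1.
apply: le_trans ih; apply: abs_fact_le.
by have := prime_gt0 hp; rewrite mulSn; lia.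
Qed.

Lemma fact_tends0 : tends0 (fun n => n`!%:R).
Proof.
move=> e e0; have [s hs] := ipX_small e0.
exists (s * p)%N => n hn; apply: (le_lt_trans _ hs).
exact: le_trans (abs_fact_le hn) (abs_fact_mulp s).
Qed.

Lemma binomK_nat m n : binomK (m%:R : K) n = 'C(m, n)%:R.
Proof.
rewrite /binomK.
have -> : \prod_(i < n) ((m%:R : K) - i%:R) = (m ^_ n)%:R.
  elim: n => [|n ih]; first by rewrite big_ord0 ffactn0.
  rewrite big_ord_recr /= ih ffactnSr natrM.
  by case: (leqP n m) => h; [rewrite natrB | rewrite ffact_small // !mul0r].
by rewrite -bin_ffact natrM mulfK // natf_neq0 // fact_gt0.
Qed.

Lemma abs_prod_subn_le1 w n : abs w <= 1 -> abs (\prod_(i < n) (w - i%:R)) <= 1.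
Proof.
move=> hw; elim: n => [|n ih]; first by rewrite big_ord0 abs1.
rewrite big_ord_recr /= absM -[1 : R]mulr1; apply: ler_pM; rewrite ?abs_ge0 //.
by apply: abs_sub_le => //; rewrite abs_nat_le1.
Qed.

Lemma abs_prod_subnB z w n : abs z <= 1 -> abs w <= 1 ->
  abs (\prod_(i < n) (z - i%:R) - \prod_(i < n) (w - i%:R)) <= abs (z - w).
Proof.
move=> hz hw; elim: n => [|n ih]; first by rewrite !big_ord0 subrr abs0 abs_ge0.
rewrite !big_ord_recr /=.
set Pz := \prod_(i < n) _; set Pw := \prod_(i < n) _.
have -> : Pz * (z - n%:R) - Pw * (w - n%:R) = (Pz - Pw) * (z - n%:R) + Pw * (z - w).
  by ring.
apply: abs_add_le.
  rewrite absM; apply: le_trans _ ih; rewrite ler_piMr ?abs_ge0 //.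
  by apply: abs_sub_le => //; rewrite abs_nat_le1.
by rewrite absM ler_piMl ?abs_ge0 // abs_prod_subn_le1.
Qed.

Lemma abs_fact_gt0 n : 0 < abs (n`!%:R : K).
Proof.
rewrite lt_def abs_ge0 andbT; apply/eqP => /abs_eq0 /eqP.
by rewrite (negbTE (natf_neq0 (fact_gt0 n))).
Qed.

Lemma abs_binomKB z w n : abs z <= 1 -> abs w <= 1 ->
  abs (binomK z n - binomK w n) <= abs (z - w) / abs (n`!%:R : K).
Proof.
move=> hz hw; rewrite /binomK -mulrBl absM absV ?natf_neq0 ?fact_gt0 //.
by rewrite ler_wpM2r ?abs_prod_subnB // invr_ge0 abs_ge0.
Qed.

(* binom(z, n) is within |z - m| / |n!| < 1 of the integer binom(m, n). *)
Lemma abs_binomK_le1 z n : Zp z -> abs (binomK z n) <= 1.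
Proof.
move=> hz; have [m hm] := hz _ (abs_fact_gt0 n).
have h : abs (binomK z n - binomK m%:R n) < 1.
  apply: (le_lt_trans (abs_binomKB n (Zp_le1 hz) (Zp_le1 (Zp_nat m)))).
  by rewrite ltr_pdivrMr ?abs_fact_gt0 // mul1r.
rewrite -(subrK (binomK m%:R n) (binomK z n)); apply: abs_add_le; first exact: ltW.
by rewrite binomK_nat abs_nat_le1.
Qed.

Lemma abs_small_eq0 x : (forall e : R, 0 < e -> abs x < e) -> x = 0.
Proof.
move=> h; apply: abs_eq0; apply/eqP; rewrite eq_le abs_ge0 andbT leNgt.
by apply/negP => hx; have := h _ hx; rewrite ltxx.
Qed.

Lemma abs_sum_tail_lt (a : nat -> K) (e : R) n m : 0 < e -> (n <= m)%N ->
  (forall i, (n <= i)%N -> abs (a i) < e) ->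
  abs (\sum_(i < m) a i - \sum_(i < n) a i) < e.
Proof.
move=> e0 h ha; rewrite -!(big_mkord xpredT) (big_cat_nat (leq0n n) h) /=.
rewrite addrAC subrr add0r big_seq; apply: abs_sum_lt => // i.
by rewrite mem_index_iota => /andP [hi _]; apply: ha.
Qed.

Lemma series_to_unique (a : nat -> K) L1 L2 :
  series_to abs a L1 -> series_to abs a L2 -> L1 = L2.
Proof.
move=> h1 h2; apply/eqP; rewrite -subr_eq0; apply/eqP; apply: abs_small_eq0 => e e0.
have [N1 hN1] := h1 e e0; have [N2 hN2] := h2 e e0.
have h := abs_sub_lt (hN1 _ (leq_maxl N1 N2)) (hN2 _ (leq_maxr N1 N2)).
set S := \sum_(i < maxn N1 N2) a i in h.
by rewrite abs_distC (_ : L2 - L1 = (S - L1) - (S - L2)) //; ring.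
Qed.

Lemma ssum_eq (a : nat -> K) L : series_to abs a L -> ssum abs a = L.
Proof.
move=> h; apply: (series_to_unique _ h).
exact: (epsilon_spec (inhabits (0 : K)) (series_to abs a) (ex_intro _ L h)).
Qed.

Lemma ssum_fin (a : nat -> K) N : (forall i, (N <= i)%N -> a i = 0) ->
  ssum abs a = \sum_(i < N) a i.
Proof.
move=> ha; apply: ssum_eq => e e0; exists N => n hn.
rewrite -!(big_mkord xpredT) (big_cat_nat (leq0n N) hn) /= addrAC subrr add0r.
by rewrite big_nat_cond big1 ?abs0 // => i /andP [/andP [hi _] _]; apply: ha.
Qed.

Lemma series_to_tends0 (a : nat -> K) : tends0 a -> series_to abs a (ssum abs a).
Proof.
move=> ha; have [L hL] : exists L, series_to abs a L.
  apply: (Cp_complete hK (u := fun n => \sum_(i < n) a i)) => e e0.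
  have [N hN] := ha e e0; exists N => m n hm hn.
  wlog nm : m n hm hn / (n <= m)%N => [wlog|].
    case: (leqP n m) => nm; first exact: wlog.
    by rewrite abs_distC; apply: wlog => //; apply: ltnW.
  by apply: abs_sum_tail_lt => // i hi; apply: hN; apply: leq_trans hi.
by rewrite (ssum_eq hL).
Qed.

Lemma abs_ssum_tail_lt (a : nat -> K) (e : R) N : tends0 a -> 0 < e ->
  (forall i, (N <= i)%N -> abs (a i) < e) -> abs (\sum_(i < N) a i - ssum abs a) < e.
Proof.
move=> /series_to_tends0 hL e0 ha; have [M hM] := hL e e0.
have h1 := hM _ (leq_maxr N M).
have h2 : abs (\sum_(i < N) a i - \sum_(i < maxn N M) a i) < e.
  by rewrite abs_distC; apply: abs_sum_tail_lt => //; exact: leq_maxl.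
exact: abs_dist_trans h2 h1.
Qed.

Lemma abs_iter_fdiff_le (g : nat -> K) (e : R) : (forall m, abs (g m) <= e) ->
  forall n m, abs (iter n fdiff g m) <= e.
Proof. by move=> h; elim=> [|n ih] m //=; apply: abs_sub_le. Qed.

(* Every inner coefficient C(p^s, j) is divisible by p; the two outer terms give
   g(m + p^s) - g m plus (1 + (-1)^(p^s)) g m, and 1 + (-1)^(p^s) is 0 or p. *)
Lemma abs_iter_fdiff_pX_le s (g : nat -> K) (B e : R) : 0 <= B -> 0 <= e ->
  (forall m, abs (g m) <= B) -> (forall m, abs (g (m + p ^ s)%N - g m) <= e) ->
  forall m, abs (iter (p ^ s) fdiff g m) <= Num.max e (B * ip).
Proof.
move=> B0 e0 hB he m; set D := (p ^ s)%N.
have D0 : (0 < D)%N by rewrite expn_gt0 prime_gt0.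
have eE : e <= Num.max e (B * ip) by rewrite le_max lexx.
have BE : B * ip <= Num.max e (B * ip) by rewrite le_max lexx orbT.
rewrite iter_fdiffE -(prednK D0) big_nat_recr //= big_nat_recl //.
rewrite prednK // subnn expr0 binn subn0 bin0 addn0 !mulr1n !mul1r !mulr1.
set M := \sum_(0 <= i < D.-1) _.
have -> : (-1) ^+ D * g m + M + g (m + D)%N
   = (g (m + D)%N - g m) + ((-1) ^+ D + 1) * g m + M by ring.
apply: abs_add_le; first apply: abs_add_le.
- exact: le_trans (he m) eE.
- rewrite absM; apply: le_trans BE; rewrite mulrC.
  case: (boolP (odd D)) => hD.
    by rewrite -signr_odd hD expr1 addNr abs0 mulr0 mulr_ge0 // ltW // ip_gt0.
  have p2 : p = 2%N.
    by have [//|op] := even_prime hp; move: hD; rewrite /D oddX op orbT.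
  rewrite -signr_odd (negbTE hD) expr0.
  have -> : (1 + 1 : K) = p%:R by rewrite p2 mulr2n.
  by rewrite (Cp_abs_p hK) ler_wpM2r // ltW // ip_gt0.
- rewrite /M big_seq; apply: abs_sum_le; first exact: le_trans e0 eE.
  move=> i; rewrite mem_index_iota => /andP [_ hi].
  rewrite !absM abs_sign mul1r; apply: le_trans BE; rewrite mulrC.
  apply: ler_pM; rewrite ?abs_ge0 //.
  have /dvdnP [t ->] : (p %| 'C(D, i.+1))%N.
    by apply: prime_dvd_bin_expn => //; move: hi D0; rewrite /D; lia.
  by have := abs_natM_pX t 1; rewrite expn1 expr1.
Qed.

Lemma abs_iter_fdiff_mulpX_le s (g : nat -> K) (B e : R) : 0 <= e ->
  (forall m, abs (g m) <= B) -> (forall m, abs (g (m + p ^ s)%N - g m) <= e) ->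
  forall t m, abs (iter (t * p ^ s) fdiff g m) <= Num.max e (B * ip ^+ t).
Proof.
move=> e0 hB he; elim=> [|t ih] m; first by rewrite mul0n expr0 mulr1 le_max hB orbT.
rewrite mulSn iterD; apply: le_trans (abs_iter_fdiff_pX_le _ _ ih _ m) _.
- by rewrite le_max e0.
- exact: e0.
- move=> m'; rewrite iter_fdiff_shiftB; exact: abs_iter_fdiff_le.
rewrite ge_max le_max lexx /= exprSr mulrA.
have ip_ge0 := ltW ip_gt0; have ip_le1 := ltW ip_lt1.
by case: (leP e (B * ip ^+ t)) => _; rewrite le_max ?lexx ?orbT // ler_piMr.
Qed.

(* One direction of Mahler's theorem, for sequences on N that are uniformly
   continuous for the p-adic topology. *)
Lemma newton_coef_tends0 (g : nat -> K) (B : R) : (forall m, abs (g m) <= B) ->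
  (forall e : R, 0 < e -> exists s, forall m, abs (g (m + p ^ s)%N - g m) < e) ->
  tends0 (newton_coef g).
Proof.
move=> hB hU eps eps0.
have B0 : 0 <= B := le_trans (abs_ge0 _) (hB 0%N).
have e0 : 0 < eps / 2 by rewrite divr_gt0.
have [s hs] := hU _ e0.
have [t ht] : exists t, ip ^+ t < eps / (B + 1).
  by apply: ipX_small; rewrite divr_gt0 // ltr_wpDl.
have hBt : B * ip ^+ t < eps.
  apply: (le_lt_trans (y := (B + 1) * ip ^+ t)); first by rewrite ler_wpM2r ?ipX_ge0 ?lerDl.
  by rewrite mulrC -ltr_pdivlMr // ltr_wpDl.
exists (t * p ^ s)%N => n hn.
rewrite /newton_coef -(subnK hn) iterD; apply: le_lt_trans (abs_iter_fdiff_le _ _ _) _.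
  exact: (abs_iter_fdiff_mulpX_le (ltW e0) hB (fun m => ltW (hs m))).
by rewrite gt_max hBt ltr_pdivrMr // ltr_pMr // ltr1n.
Qed.

Lemma eqmod_pX_limit (J : nat -> nat) : (forall k, J k.+1 = J k %[mod p ^ k]) ->
  exists2 x0, Zp x0 & forall k, abs ((J k)%:R - x0) <= ip ^+ k.
Proof.
move=> hJ.
have Jmod k n : (k <= n)%N -> J n = J k %[mod p ^ k].
  elim: n => [|n ih]; first by rewrite leqn0 => /eqP ->.
  rewrite leq_eqVlt => /orP [/eqP -> //|]; rewrite ltnS => hk.
  by rewrite -(modn_dvdm (J n.+1) (dvdn_exp2l p hk)) hJ modn_dvdm ?dvdn_exp2l // ih.
have [x0 hx0] : exists L, forall eps : R, 0 < eps ->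
    exists N, forall n, (N <= n)%N -> abs ((J n)%:R - L) < eps.
  apply: (Cp_complete hK) => eps eps0; have [N hN] := ipX_small eps0.
  exists N => m n hm hn; apply: le_lt_trans hN; apply: abs_natB_eqmod.
  by rewrite (Jmod N m hm) (Jmod N n hn).
have close k : abs ((J k)%:R - x0) <= ip ^+ k.
  have [N hN] : exists N, forall n, (N <= n)%N -> abs ((J n)%:R - x0) < ip ^+ k.
    by apply: hx0; rewrite exprn_gt0 // ip_gt0.
  rewrite -(subrK (J (maxn N k))%:R (J k)%:R) -addrA; apply: abs_add_le.
    by rewrite abs_distC; apply: abs_natB_eqmod; rewrite Jmod // leq_maxr.
  exact/ltW/hN/leq_maxl.
exists x0 => // eps eps0; have [k hk] := ipX_small eps0.
by exists (J k); rewrite abs_distC; exact: le_lt_trans (close k) hk.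
Qed.

Section ContinuousOnZp.
Variable phi : K -> K.
Hypothesis hphi : cont_on_Zp abs phi.

Lemma cont_on_Zp_pair z (e : R) : Zp z -> 0 < e ->
  exists2 delta : R, 0 < delta & forall a b, Zp a -> Zp b ->
    abs (a - z) < delta -> abs (b - z) < delta -> abs (phi a - phi b) < e.
Proof.
move=> hz e0; have [d d0 hd] := hphi hz e0.
exists d => // a b ha hb h1 h2.
by apply: (abs_dist_trans (hd _ ha h1)); rewrite abs_distC; exact: hd.
Qed.

(* By contradiction: a bad pair (m, m + p^s) for infinitely many s is found in
   ever smaller residue classes (pigeonhole); the classes shrink to a point x0 of
   Z_p at which phi would fail to be continuous. *)
Lemma cont_on_Zp_nat_uniform (e : R) : 0 < e ->
  exists s, forall m, abs (phi (m + p ^ s)%N%:R - phi m%:R) < e.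
Proof.
move=> e0; apply: NNPP => hneg.
pose F m s := e <= abs (phi (m + p ^ s)%N%:R - phi m%:R).
pose bad (k j : nat) := infinitely (fun s => exists2 m, (m %% p ^ k = j)%N & F m s).
have bad0 : bad 0%N 0%N.
  move=> s; exists s => //; apply: NNPP => hm; apply: hneg; exists s => m.
  rewrite ltNge; apply/negP => hF; apply: hm.
  by exists m; rewrite ?expn0 ?modn1.
have step k j : bad k j -> exists r, bad k.+1 r /\ (r %% p ^ k = j)%N.
  move=> hb.
  pose Q r s := (r %% p ^ k = j)%N /\ exists2 m, (m %% p ^ k.+1 = r)%N & F m s.
  have [r _ hr] : exists2 r, (r < p ^ k.+1)%N & infinitely (Q r).
    apply: infinitely_pigeonhole => s; have [s' hs' [m hm hF]] := hb s.
    exists s' => //; exists (m %% p ^ k.+1)%N; first by rewrite ltn_pmod // expn_gt0 prime_gt0.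
    by split; [rewrite modn_dvdm ?dvdn_exp2l | exists m].
  exists r; split; first by move=> s; have [s' hs' [_ hm]] := hr s; exists s'.
  by have [s' _ []] := hr 0%N.
have [J hJ] := nat_dependent_choice bad0 step.
have hJmod k : J k.+1 = J k %[mod p ^ k] by rewrite -[in RHS](hJ k).2 modn_mod.
have [x0 Zx0 hx0] := eqmod_pX_limit hJmod.
have [d d0 hd] := cont_on_Zp_pair Zx0 e0.
have [k hk] := ipX_small d0.
have [s' hs' [m hm hF]] := (hJ k).1 k.
have near_x0 n : n = J k %[mod p ^ k] -> abs (n%:R - x0) < d.
  move=> hn; rewrite -(subrK (J k)%:R n%:R) -addrA; apply: abs_add_lt.
    exact: le_lt_trans (abs_natB_eqmod hn) hk.
  exact: le_lt_trans (hx0 k) hk.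
have hmJ : m = J k %[mod p ^ k] by rewrite -hm modn_mod.
have hmJ' : (m + p ^ s')%N = J k %[mod p ^ k].
  by rewrite -(subnK hs') expnD addnC modnMDl.
have := hd _ _ (Zp_nat _) (Zp_nat _) (near_x0 _ hmJ') (near_x0 _ hmJ).
by move/lt_le_trans/(_ hF); rewrite ltxx.
Qed.

(* Uniform continuity with precision 1 reduces every m to its residue mod p^s. *)
Lemma cont_on_Zp_bounded : exists2 B : R, 1 <= B & forall z, Zp z -> abs (phi z) <= B.
Proof.
have [s hs] := cont_on_Zp_nat_uniform ltr01; set D := (p ^ s)%N.
have D0 : (0 < D)%N by rewrite expn_gt0 prime_gt0.
set B := Num.max 1 (\big[Num.max/0]_(i < D) abs (phi (nat_of_ord i)%:R)).
have B1 : 1 <= B by rewrite le_max lexx.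
have hBn m : abs (phi m%:R) <= B.
  have tel q r : abs (phi (r + q * D)%N%:R - phi r%:R) < 1.
    elim: q => [|q ih]; first by rewrite mul0n addn0 subrr abs0.
    by rewrite mulSnr addnA; apply: abs_dist_trans ih; exact: hs.
  rewrite (divn_eq m D) addnC -(subrK (phi (m %% D)%:R) (phi _)).
  apply: abs_add_le; first exact: le_trans (ltW (tel _ _)) B1.
  rewrite le_max; apply/orP; right.
  exact: (le_bigmax _ (fun i : 'I_D => abs (phi (nat_of_ord i)%:R)) (Ordinal (ltn_pmod m D0))).
exists B => // z hz; have [d d0 hd] := hphi hz ltr01.
have [m hm] := hz d d0.
rewrite -(subrK (phi m%:R) (phi z)); apply: abs_add_le => //.
by apply: le_trans B1; apply: ltW; rewrite abs_distC; apply: hd (Zp_nat _) _; rewrite abs_distC.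
Qed.

Lemma mahler_tends0 : tends0 (mahler phi).
Proof.
have [B _ hB] := cont_on_Zp_bounded.
have -> : mahler phi = newton_coef (fun m => phi m%:R).
  by apply: functional_extensionality => n; exact: mahler_nat.
apply: (newton_coef_tends0 (B := B)); first by move=> m; apply: hB; exact: Zp_nat.
exact: cont_on_Zp_nat_uniform.
Qed.

End ContinuousOnZp.

Definition nat_cont_at (f : K -> K) (x : K) :=
  forall e : R, 0 < e -> exists2 d : R, 0 < d &
    forall m : nat, abs (x - m%:R) < d -> abs (f x - f m%:R) < e.

Lemma nat_cont_atB f g x :
  nat_cont_at f x -> nat_cont_at g x -> nat_cont_at (fun z => f z - g z) x.
Proof.
move=> hf hg e e0; have [d1 d10 hd1] := hf e e0; have [d2 d20 hd2] := hg e e0.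
exists (Num.min d1 d2); first by rewrite lt_min d10 d20.
move=> m; rewrite lt_min => /andP [h1 h2].
rewrite (_ : f x - g x - (f m%:R - g m%:R) = (f x - f m%:R) - (g x - g m%:R)); last by ring.
by apply: abs_sub_lt; [apply: hd1 | apply: hd2].
Qed.

Lemma nat_cont_at_sum (F : nat -> K -> K) x N : (forall n, nat_cont_at (F n) x) ->
  nat_cont_at (fun z => \sum_(n < N) F n z) x.
Proof.
move=> hF; elim: N => [|N ih] e e0.
  by exists 1 => // m _; rewrite !big_ord0 subrr abs0.
have [d1 d10 hd1] := ih e e0; have [d2 d20 hd2] := hF N e e0.
exists (Num.min d1 d2); first by rewrite lt_min d10 d20.
move=> m; rewrite lt_min => /andP [h1 h2]; rewrite !big_ord_recr /=.
rewrite (_ : _ + F N x - _ = (\sum_(i < N) F i x - \sum_(i < N) F i m%:R)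
                           + (F N x - F N m%:R)); last by ring.
by apply: abs_add_lt; [apply: hd1 | apply: hd2].
Qed.

Lemma nat_cont_atM f g x (B : R) : Zp x -> 0 < B ->
  (forall z, Zp z -> abs (f z) <= B) -> (forall z, Zp z -> abs (g z) <= B) ->
  nat_cont_at f x -> nat_cont_at g x -> nat_cont_at (fun z => f z * g z) x.
Proof.
move=> hx B0 hfB hgB hf hg e e0.
have eB : 0 < e / B by rewrite divr_gt0.
have small a b : 0 <= a -> a < e / B -> 0 <= b -> b <= B -> a * b < e.
  move=> a0 ha b0 bB; apply: (le_lt_trans (y := a * B)); first by rewrite ler_wpM2l.
  by rewrite -ltr_pdivlMr.
have [d1 d10 hd1] := hf _ eB; have [d2 d20 hd2] := hg _ eB.
exists (Num.min d1 d2); first by rewrite lt_min d10 d20.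
move=> m; rewrite lt_min => /andP [h1 h2].
rewrite (_ : f x * g x - f m%:R * g m%:R
           = (f x - f m%:R) * g x + f m%:R * (g x - g m%:R)); last by ring.
apply: abs_add_lt; rewrite absM.
  by apply: small (abs_ge0 _) (hd1 _ h1) (abs_ge0 _) (hgB _ hx).
by rewrite mulrC; apply: small (abs_ge0 _) (hd2 _ h2) (abs_ge0 _) (hfB _ (Zp_nat m)).
Qed.

Lemma nat_cont_at_cst c x : nat_cont_at (fun=> c) x.
Proof. by move=> e e0; exists 1 => // m _; rewrite subrr abs0. Qed.

Lemma nat_cont_at_binomK x n : Zp x -> nat_cont_at (fun z => binomK z n) x.
Proof.
move=> hx e e0; have f0 := abs_fact_gt0 n.
exists (e * abs (n`!%:R : K)); first by rewrite mulr_gt0.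
move=> m hm; apply: le_lt_trans (abs_binomKB n (Zp_le1 hx) (Zp_le1 (Zp_nat m))) _.
by rewrite ltr_pdivrMr.
Qed.

Lemma nat_cont_at_comp_subn f x n : cont_on_Zp abs f -> Zp x ->
  nat_cont_at (fun z => f (z - n%:R)) x.
Proof.
move=> hf hx e e0; have [d d0 hd] := hf _ (Zp_subn n hx) e e0.
exists d => // m hm; rewrite abs_distC; apply: hd; first exact: Zp_subn (Zp_nat m).
by rewrite opprB addrA subrK abs_distC.
Qed.

Definition unif_tends0 (U : nat -> K -> K) :=
  forall e : R, 0 < e -> exists N, forall n, (N <= n)%N -> forall z, Zp z -> abs (U n z) < e.

Lemma ssum_eq_from_nat (U V : nat -> K -> K) x : Zp x ->
  unif_tends0 U -> unif_tends0 V ->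
  (forall N, nat_cont_at (fun z => \sum_(n < N) (U n z - V n z)) x) ->
  (forall m : nat, ssum abs (U^~ m%:R) = ssum abs (V^~ m%:R)) ->
  ssum abs (U^~ x) = ssum abs (V^~ x).
Proof.
move=> hx hU hV hc hnat; apply/eqP; rewrite -subr_eq0; apply/eqP.
apply: abs_small_eq0 => e e0.
have [N1 hN1] := hU e e0; have [N2 hN2] := hV e e0; set N := maxn N1 N2.
have tail (W : nat -> K -> K) N' z : unif_tends0 W -> Zp z ->
    (forall n, (N' <= n)%N -> abs (W n z) < e) ->
    abs (\sum_(n < N') W n z - ssum abs (W^~ z)) < e.
  move=> hW hz; apply: abs_ssum_tail_lt => // e' e'0.
  by have [M hM] := hW e' e'0; exists M => n hn; apply: hM.
have tailU z : Zp z -> abs (\sum_(n < N) U n z - ssum abs (U^~ z)) < e.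
  by move=> hz; apply: tail => // n hn; apply: hN1 => //; exact: leq_trans (leq_maxl _ _) hn.
have tailV z : Zp z -> abs (\sum_(n < N) V n z - ssum abs (V^~ z)) < e.
  by move=> hz; apply: tail => // n hn; apply: hN2 => //; exact: leq_trans (leq_maxr _ _) hn.
have [d d0 hd] := hc N e e0; have [m hm] := hx d d0.
have hdm := hd m hm; rewrite !sumrB in hdm.
have -> : ssum abs (U^~ x) - ssum abs (V^~ x)
  = - (\sum_(n < N) U n x - ssum abs (U^~ x)) + (\sum_(n < N) V n x - ssum abs (V^~ x))
    + (\sum_(n < N) U n x - \sum_(n < N) V n x
       - (\sum_(n < N) U n m%:R - \sum_(n < N) V n m%:R))
    + (\sum_(n < N) U n m%:R - ssum abs (U^~ m%:R))
    - (\sum_(n < N) V n m%:R - ssum abs (V^~ m%:R)).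
  by rewrite hnat; ring.
apply: abs_sub_lt; last exact: tailV (Zp_nat m).
apply: abs_add_lt; last exact: tailU (Zp_nat m).
apply: abs_add_lt => //; apply: abs_add_lt; last exact: tailV.
by rewrite absN; exact: tailU.
Qed.

Section Convolution.
Variables (phi : K -> K) (y : K).
Hypotheses (hphi : cont_on_Zp abs phi) (hy : Zp y).

Definition star_coef (k : nat) : K := (-1) ^+ k * k`!%:R * binomK y k.

Definition conv_coef (n : nat) : K :=
  \sum_(k < n.+1) 'C(n, k)%:R * star_coef k * mahler phi (n - k).

Definition mu_term (n : nat) (z : K) : K := star_coef n * binomK z n * phi (z - n%:R).

Definition conv_term (n : nat) (z : K) : K := conv_coef n * binomK z n.

Lemma abs_star_coef_le k : abs (star_coef k) <= abs (k`!%:R : K).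
Proof.
rewrite /star_coef -mulrA absM abs_sign mul1r absM.
by rewrite ler_piMr ?abs_ge0 ?abs_binomK_le1.
Qed.

Lemma abs_star_coef_le1 k : abs (star_coef k) <= 1.
Proof. exact: le_trans (abs_star_coef_le k) (abs_nat_le1 _). Qed.

Lemma star_coef_tends0 : tends0 star_coef.
Proof.
move=> e e0; have [N hN] := fact_tends0 e0.
by exists N => n hn; exact: le_lt_trans (abs_star_coef_le n) (hN n hn).
Qed.

Lemma mahler_one_minus_x_star k : mahler (one_minus_x_star abs y) k = star_coef k.
Proof.
rewrite mahler_nat.
have -> : (fun m : nat => one_minus_x_star abs y m%:R) = fun m => binom_comb star_coef m.+1 m.
  apply: functional_extensionality => m.
  rewrite /one_minus_x_star /Sop (ssum_fin (N := m.+1)).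
    by rewrite /binom_comb big_mkord; apply: eq_bigr => i _; rewrite binomK_nat mulr1.
  by move=> i hi; rewrite binomK_nat bin_small // mulr0 mul0r.
by rewrite newton_coef_binom_comb.
Qed.

Lemma integral_mu_one_minus_x_star x :
  integral_mu abs phi x (one_minus_x_star abs y) = ssum abs (mu_term^~ x).
Proof.
rewrite /integral_mu; congr ssum; apply: functional_extensionality => k.
by rewrite mahler_one_minus_x_star.
Qed.

Lemma conv_one_minus_x_star x :
  conv abs (one_minus_x_star abs y) phi x = ssum abs (conv_term^~ x).
Proof.
rewrite /conv; congr ssum; apply: functional_extensionality => n.
rewrite /conv_term /conv_coef; congr (_ * _); apply: eq_bigr => k _.
by rewrite mahler_one_minus_x_star.
Qed.

Lemma ssum_mu_term_nat m : ssum abs (mu_term^~ m%:R) = ssum abs (conv_term^~ m%:R).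
Proof.
rewrite (ssum_fin (N := m.+1)); last first.
  by move=> n hn; rewrite /mu_term binomK_nat bin_small // mulr0 mul0r.
rewrite (ssum_fin (N := m.+1)); last first.
  by move=> n hn; rewrite /conv_term binomK_nat bin_small // mulr0.
rewrite -(big_mkord xpredT (fun n => mu_term n m%:R)).
rewrite -(big_mkord xpredT (fun n => conv_term n m%:R)).
have -> : \sum_(0 <= n < m.+1) mu_term n m%:R
        = \sum_(0 <= n < m.+1) star_coef n * 'C(m, n)%:R * phi (m - n)%N%:R.
  rewrite big_nat_cond [in RHS]big_nat_cond.
  apply: eq_bigr => n /andP [/andP [_ hn] _].
  by rewrite /mu_term binomK_nat natrB.
rewrite (binomial_convolution star_coef (fun k => phi k%:R)); apply: eq_bigr => N _.
rewrite /conv_term /conv_coef binomK_nat big_mkord; congr (_ * _).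
by apply: eq_bigr => k _; rewrite mahler_nat.
Qed.

Lemma Top_eq_integral_mu x :
  Top abs x phi y = integral_mu abs phi x (one_minus_x_star abs y).
Proof. by rewrite integral_mu_one_minus_x_star. Qed.

Lemma conv_term_nat_cont_at n x : Zp x -> nat_cont_at (conv_term n) x.
Proof.
move=> hx; have C0 : 0 < 1 + abs (conv_coef n) by rewrite ltr_wpDr ?abs_ge0.
apply: (nat_cont_atM hx C0 _ _ (nat_cont_at_cst _ _) (nat_cont_at_binomK n hx)).
  by move=> _ _; rewrite lerDr.
by move=> z hz; apply: le_trans (abs_binomK_le1 n hz) _; rewrite lerDl abs_ge0.
Qed.

Section Bounded.
Variables (B : R).
Hypotheses (B1 : 1 <= B) (hB : forall z, Zp z -> abs (phi z) <= B).

Lemma conv_coef_tends0 : tends0 conv_coef.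
Proof.
have B0 : 0 < B by apply: lt_le_trans B1; exact: ltr01.
have hM j : abs (mahler phi j) <= B.
  by rewrite mahler_nat; apply: abs_iter_fdiff_le => m; apply: hB; exact: Zp_nat.
move=> e e0; have [N1 hN1] := star_coef_tends0 (divr_gt0 e0 B0).
have [N2 hN2] := mahler_tends0 hphi e0; exists (N1 + N2)%N => n hn.
apply: abs_sum_lt => // k _; rewrite -mulrA absM; apply: le_lt_trans (ler_piMl _ (abs_nat_le1 _)) _.
  exact: abs_ge0.
rewrite absM; case: (leqP N1 k) => hk.
  apply: (le_lt_trans (y := abs (star_coef k) * B)); first by rewrite ler_wpM2l ?abs_ge0.
  by rewrite -ltr_pdivlMr //; apply: hN1.
apply: le_lt_trans (ler_piMl (abs_ge0 _) (abs_star_coef_le1 k)) _.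
by apply: hN2; move: hn hk (ltn_ord k); lia.
Qed.

Lemma mu_term_unif_tends0 : unif_tends0 mu_term.
Proof.
have B0 : 0 < B by apply: lt_le_trans B1; exact: ltr01.
move=> e e0; have [N hN] := star_coef_tends0 (divr_gt0 e0 B0).
exists N => n hn z hz; rewrite /mu_term -mulrA absM.
apply: (le_lt_trans (y := abs (star_coef n) * B)); last by rewrite -ltr_pdivlMr //; apply: hN.
rewrite ler_wpM2l ?abs_ge0 // absM.
apply: le_trans (_ : abs (phi (z - n%:R)) <= B); last exact/hB/Zp_subn.
by rewrite ler_piMl ?abs_ge0 ?abs_binomK_le1.
Qed.

Lemma conv_term_unif_tends0 : unif_tends0 conv_term.
Proof.
move=> e e0; have [N hN] := conv_coef_tends0 e0.
exists N => n hn z hz; rewrite /conv_term absM; apply: le_lt_trans (hN n hn).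
by rewrite ler_piMr ?abs_ge0 ?abs_binomK_le1.
Qed.

Lemma mu_term_nat_cont_at n x : Zp x -> nat_cont_at (mu_term n) x.
Proof.
move=> hx; have B0 : 0 < B by apply: lt_le_trans B1; exact: ltr01.
apply: (nat_cont_atM hx B0 _ _ _ (nat_cont_at_comp_subn n hphi hx)).
- move=> z hz; rewrite absM; apply: le_trans B1.
  by rewrite -[1]mulr1 ler_pM ?abs_ge0 ?abs_star_coef_le1 ?abs_binomK_le1.
- by move=> z hz; apply/hB/Zp_subn.
apply: (nat_cont_atM hx ltr01); first by move=> *; exact: abs_star_coef_le1.
  by move=> z hz; exact: abs_binomK_le1.
by apply: nat_cont_at_cst.
exact: nat_cont_at_binomK.
Qed.

End Bounded.

Lemma integral_mu_eq_conv x : Zp x ->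
  integral_mu abs phi x (one_minus_x_star abs y) = conv abs (one_minus_x_star abs y) phi x.
Proof.
move=> hx; have [B B1 hB] := cont_on_Zp_bounded hphi.
rewrite integral_mu_one_minus_x_star conv_one_minus_x_star.
apply: (ssum_eq_from_nat hx (mu_term_unif_tends0 B1 hB) (conv_term_unif_tends0 B1 hB)
  _ ssum_mu_term_nat) => N.
exact: (nat_cont_at_sum N (fun n =>
  nat_cont_atB (mu_term_nat_cont_at B1 hB n hx) (conv_term_nat_cont_at n hx))).
Qed.

End Convolution.

End Ultrametric.

Theorem proposition6p8 (p : nat) (K : closedFieldType) (R : realType)
  (abs : K -> R) (hp : prime p) (hK : is_Cp p abs)
  (phi : K -> K) (hphi : cont_on_Zp abs phi)
  (x y : K) (hx : Zp_set abs x) (hy : Zp_set abs y) :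
  Top abs x phi y = integral_mu abs phi x (one_minus_x_star abs y)
  /\ integral_mu abs phi x (one_minus_x_star abs y)
     = conv abs (one_minus_x_star abs y) phi x.
Proof.
split; first exact: Top_eq_integral_mu hp hK phi y x.
exact: (integral_mu_eq_conv hp hK hphi hy hx).
Qed.
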